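(* Let $\lambda>0$, let $\boldsymbol\alpha^\star$ be the optimal solution of the dual problem $\max_{\boldsymbol\alpha\ge\mathbf0}D_\lambda(\boldsymbol\alpha)$ and $\mathbf m^\star$ the optimal solution of the primal problem $\min_{\mathbf m\ge\mathbf0}P_\lambda(\mathbf m)$. Suppose $\mathbf q\in\mathbb R^{2nK}_{\ge0}$ and $r\ge0$ satisfy $\|\boldsymbol\alpha^\star-\mathbf q\|_2^2\le r^2$. For $k\in[p]$ let $$\mathrm{Prune}(k\mid\mathbf q,r)=\sum_{i\in[n]}\sum_{l\in\mathcal D_i}q_{il}\max\{x_{i,k},x_{l,k}\}^2+r\sqrt{\sum_{i\in[n]}\Big[\sum_{l\in\mathcal D_i}\max\{x_{i,k},x_{l,k}\}^4+\sum_{j\in\mathcal S_i}\max\{x_{i,k},x_{j,k}\}^4\Big]}.$$ If $\mathrm{Prune}(k\mid\mathbf q,r)\le\lambda$, then $m^\star_{k'}=0$ for every descendant $k'\supseteq k$.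
   Context: Let $n,K,p\ge1$ be integers, $[n]=\{1,\dots,n\}$. For each $i\in[n]$ let $\mathbf x_i=(x_{i,1},\dots,x_{i,p})^\top\in\mathbb R^p$ have nonnegative entries and let $\mathcal D_i,\mathcal S_i\subseteq[n]$ be sets of size $K$. Put $\mathbf c_{ij}=(\mathbf x_i-\mathbf x_j)\circ(\mathbf x_i-\mathbf x_j)$ (entrywise product). Vectors in $\mathbb R^{2nK}$ are indexed by the pairs $(i,l)$, $l\in\mathcal D_i$ (''different-class pairs'') and $(i,j)$, $j\in\mathcal S_i$ (''same-class pairs''); $\mathbf q$ has entries $q_{il},q_{ij}$. $\mathbf C\in\mathbb R^{p\times2nK}$ has column $\mathbf c_{il}$ for each different-class pair and $-\mathbf c_{ij}$ for each same-class pair. Fix $L\ge U\ge0$, $\eta>0$; let $\mathbf t\in\mathbb R^{2nK}$ have entry $L$ at different-class pairs and $-U$ at same-class pairs; $\ell_s(x)=([s-x]_+)^2$ with $[z]_+=\max\{z,0\}$ (entrywise for vectors); $\mathbf1$ is the all-ones vector. For $\lambda>0$, $$P_\lambda(\mathbf m)=\sum_{i\in[n]}\Big[\sum_{l\in\mathcal D_i}\ell_L(\mathbf m^\top\mathbf c_{il})+\sum_{j\in\mathcal S_i}\ell_{-U}(-\mathbf m^\top\mathbf c_{ij})\Big]+\lambda\Big(\mathbf m^\top\mathbf1+\frac\eta2\|\mathbf m\|_2^2\Big)\ (\mathbf m\in\mathbb R^p_{\ge0}),$$ $$D_\lambda(\boldsymbol\alpha)=-\frac14\|\boldsymbol\alpha\|_2^2+\mathbf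 t^\top\boldsymbol\alpha-\frac{\lambda\eta}2\Big\|\frac1{\lambda\eta}[\mathbf C\boldsymbol\alpha-\lambda\mathbf1]_+\Big\|_2^2\ (\boldsymbol\alpha\in\mathbb R^{2nK}_{\ge0}).$$ The feature indices $[p]$ are nodes of a rooted graph-mining tree: $x_{i,k}=g(\#(H_k\sqsubseteq G_i))$, where $H_k$ is the subgraph at node $k$, $G_i$ the $i$-th input graph, $\#(H\sqsubseteq G)$ the number of non-overlapping occurrences of $H$ in $G$, $g$ nonnegative and nondecreasing, and each node's subgraph is contained in its children's subgraphs. Write $k'\supseteq k$ if $k'$ is a descendant of $k$; in particular $0\le x_{i,k'}\le x_{i,k}$ for all $i$ whenever $k'\supseteq k$. *)

From HB Require Import structures.
From mathcomp Require Import all_boot all_order all_algebra.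
From mathcomp Require Import reals.
Set Implicit Arguments. Unset Strict Implicit. Unset Printing Implicit Defensive.
Import Order.TTheory GRing.Theory Num.Theory.
Local Open Scope ring_scope.

Section Defs.
Variables (R : realType) (n p : nat).
Variable x : 'I_n -> 'I_p -> R.
(* D i = different-class set D_i, S i = same-class set S_i *)
Variables (D S : 'I_n -> {set 'I_n}).

Definition pospart (z : R) : R := Num.max z 0.
Definition hinge2 (s z : R) : R := (pospart (s - z)) ^+ 2.

Definition cvec (i j : 'I_n) (k : 'I_p) : R := (x i k - x j k) ^+ 2.

Definition mc (m : 'I_p -> R) (i j : 'I_n) : R := \sum_(k < p) m k * cvec i j k.

Definition Pobj (L U lam eta : R) (m : 'I_p -> R) : R :=
  \sum_(i < n) (\sum_(l in D i) hinge2 L (mc m i l)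
              + \sum_(j in S i) hinge2 (- U) (- mc m i j))
  + lam * (\sum_(k < p) m k + eta / 2 * \sum_(k < p) m k ^+ 2).

(* A vector alpha in R^{2nK}, indexed by the pairs (i,l), l in D_i and
   (i,j), j in S_i, is represented by two functions aD aS : 'I_n -> 'I_n -> R,
   of which only the entries aD i l (l \in D i) and aS i j (j \in S i) matter. *)
Definition vnorm2 (aD aS : 'I_n -> 'I_n -> R) : R :=
  \sum_(i < n) (\sum_(l in D i) aD i l ^+ 2 + \sum_(j in S i) aS i j ^+ 2).

Definition vnonneg (aD aS : 'I_n -> 'I_n -> R) : Prop :=
  forall i, (forall l, l \in D i -> 0 <= aD i l) /\ (forall j, j \in S i -> 0 <= aS i j).

Definition Calpha (aD aS : 'I_n -> 'I_n -> R) (k : 'I_p) : R :=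
  \sum_(i < n) (\sum_(l in D i) aD i l * cvec i l k
              - \sum_(j in S i) aS i j * cvec i j k).

Definition talpha (L U : R) (aD aS : 'I_n -> 'I_n -> R) : R :=
  \sum_(i < n) (\sum_(l in D i) L * aD i l + \sum_(j in S i) (- U) * aS i j).

Definition Dobj (L U lam eta : R) (aD aS : 'I_n -> 'I_n -> R) : R :=
  - (1 / 4) * vnorm2 aD aS + talpha L U aD aS
  - lam * eta / 2 * \sum_(k < p) ((lam * eta)^-1 * pospart (Calpha aD aS k - lam)) ^+ 2.

Definition Prune (qD : 'I_n -> 'I_n -> R) (r : R) (k : 'I_p) : R :=
  \sum_(i < n) \sum_(l in D i) qD i l * (Num.max (x i k) (x l k)) ^+ 2
  + r * Num.sqrt (\sum_(i < n) (\sum_(l in D i) (Num.max (x i k) (x l k)) ^+ 4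
                               + \sum_(j in S i) (Num.max (x i k) (x j k)) ^+ 4)).
End Defs.

(* Weak duality holds as an identity: for [m >= 0] and [alpha >= 0],
   [P m = D alpha + (loss gaps) + (regulariser gaps)], where every gap is a nonnegative
   Fenchel-Young gap and the regulariser gap of coordinate [k] is taken against
   [(C alpha)_k - lambda].  At the dual point [2 [L - mstar^T c]_+, 2 [mstar^T c - U]_+] read off
   the primal optimum the loss gaps vanish; moving [mstar] by [t] towards the minimiser of the
   regulariser gaps changes the loss gaps by [O(t^2)] but scales the regulariser gaps by
   [1 - t], so these vanish as well and [P mstar <= D alphastar].  Hence all gaps vanish at the
   pair [mstar, alphastar], and when [(C alphastar)_k <= lambda] the gap of coordinate [k] is at
   least [lambda eta / 2 * (mstar_k)^2].  Finally [(C alphastar)_k' <= Prune(k | q, r)] for every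
   descendant [k']: the same-class terms are nonpositive,
   [(x_{i,k'} - x_{l,k'})^2 <= max(x_{i,k}, x_{l,k})^2], and Cauchy-Schwarz bounds the
   contribution of [alphastar - q] by [r] times the square root. *)

From Pilot Require Import Defs.
From HB Require Import structures.
From mathcomp Require Import all_boot all_order all_algebra.
From mathcomp Require Import reals ring lra.
Import Order.TTheory GRing.Theory Num.Theory.
Local Open Scope ring_scope.
Set Implicit Arguments. Unset Strict Implicit.

Section PositivePart.
Variable R : realType.
Implicit Types u a c m s t w z : R.

Lemma pospart_ge0 u : 0 <= pospart u.
Proof. by rewrite /pospart le_max lexx orbT. Qed.

Lemma le_pospart u : u <= pospart u.
Proof. by rewrite /pospart le_max lexx. Qed.

Lemma pospart_eq0 u : u <= 0 -> pospart u = 0.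
Proof. exact: max_r. Qed.

Lemma pospart_id u : 0 <= u -> pospart u = u.
Proof. exact: max_l. Qed.

Lemma mul_pospart_sub u : pospart u * (pospart u - u) = 0.
Proof.
by case: (leP u 0) => [/pospart_eq0 -> | /ltW/pospart_id ->]; rewrite ?mul0r ?subrr ?mulr0.
Qed.

Lemma hinge2_oppr s z : hinge2 (- s) (- z) = pospart (z - s) ^+ 2.
Proof. by rewrite /hinge2 opprK addrC. Qed.

(* [sqpos_gap u a] is the Fenchel-Young gap of [u |-> [u]_+^2], whose conjugate is
   [a |-> a^2/4] on [a >= 0]; [nnquad_gap c m s] is the one of [m |-> c/2 m^2] on
   [m >= 0], whose conjugate is [s |-> [s]_+^2/(2c)]. *)
Definition sqpos_gap u a := pospart u ^+ 2 - a * u + a ^+ 2 / 4.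

Definition nnquad_gap c m s := c / 2 * m ^+ 2 - m * s + pospart s ^+ 2 / (2 * c).

Lemma sqpos_gap_ge0 u a : 0 <= a -> 0 <= sqpos_gap u a.
Proof.
move=> a_ge0; have : 0 <= a * (pospart u - u) by rewrite mulr_ge0 // subr_ge0 le_pospart.
have := sqr_ge0 (pospart u - a / 2); rewrite /sqpos_gap; nra.
Qed.

Lemma sqpos_gap_opt u : sqpos_gap u (2 * pospart u) = 0.
Proof. by have := mul_pospart_sub u; rewrite /sqpos_gap; nra. Qed.

Lemma sqpos_gap_le u u0 : sqpos_gap u (2 * pospart u0) <= (u - u0) ^+ 2.
Proof.
have := sqr_ge0 u; have := sqr_ge0 u0; have := sqr_ge0 (u - u0); rewrite /sqpos_gap.
case: (leP u 0) => [/[dup] ? /pospart_eq0 -> | /[dup] ? /ltW/pospart_id ->];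
case: (leP u0 0) => [/[dup] ? /pospart_eq0 -> | /[dup] ? /ltW/pospart_id ->]; nra.
Qed.

Lemma nnquad_gapE c m s : c != 0 ->
  nnquad_gap c m s = (c * m - pospart s) ^+ 2 / (2 * c) + m * (pospart s - s).
Proof. by move=> c_neq0; rewrite /nnquad_gap; field. Qed.

Lemma nnquad_gap_ge0 c m s : 0 < c -> 0 <= m -> 0 <= nnquad_gap c m s.
Proof.
move=> c_gt0 m_ge0; rewrite nnquad_gapE ?gt_eqF //.
apply: addr_ge0; last by rewrite mulr_ge0 // subr_ge0 le_pospart.
by apply: divr_ge0; [exact: sqr_ge0 | lra].
Qed.

Lemma nnquad_gap_opt c s : c != 0 -> nnquad_gap c (pospart s / c) s = 0.
Proof.
move=> c_neq0; rewrite nnquad_gapE // mulrCA divff // mulr1 subrr expr0n /= mul0r add0r.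
by rewrite mulrAC mul_pospart_sub mul0r.
Qed.

Lemma nnquad_gap_convex c m w s t : 0 <= c -> 0 <= t <= 1 ->
  nnquad_gap c (m + t * (w - m)) s <= (1 - t) * nnquad_gap c m s + t * nnquad_gap c w s.
Proof.
move=> c_ge0 /andP[t_ge0 t_le1].
have -> : (1 - t) * nnquad_gap c m s + t * nnquad_gap c w s =
          nnquad_gap c (m + t * (w - m)) s + c / 2 * (t * (1 - t)) * (m - w) ^+ 2.
  by rewrite /nnquad_gap; ring.
rewrite lerDl; apply: mulr_ge0; last exact: sqr_ge0.
by apply: mulr_ge0; [lra | nra].
Qed.

Lemma nnquad_gap_eq0 c m s : 0 < c -> 0 <= m -> s <= 0 -> nnquad_gap c m s = 0 -> m = 0.
Proof.
move=> c_gt0 m_ge0 s_le0; rewrite /nnquad_gap pospart_eq0 // expr0n /= mul0r addr0 => gap0.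
have : c / 2 * m ^+ 2 <= 0 by nra.
by rewrite pmulr_rle0 ?divr_gt0 // => m2_le0; apply/eqP; rewrite -sqrf_eq0 eq_le m2_le0 sqr_ge0.
Qed.

End PositivePart.

Section CauchySchwarz.
Variables (R : rcfType) (I : finType) (P : pred I) (u v : I -> R).

Lemma CauchySchwarz_sumr :
  (\sum_(i | P i) u i * v i) ^+ 2 <= (\sum_(i | P i) u i ^+ 2) * \sum_(i | P i) v i ^+ 2.
Proof.
set A := \sum_(i | P i) u i ^+ 2; set B := \sum_(i | P i) v i ^+ 2.
set C := \sum_(i | P i) u i * v i.
have : 0 <= B by apply: sumr_ge0 => i _; exact: sqr_ge0.
rewrite le_eqVlt => /predU1P[/esym B_eq0 | B_gt0].
  have v0 i : P i -> v i = 0.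
    by move=> Pi; apply/eqP; rewrite -sqrf_eq0 (psumr_eq0P _ B_eq0) // => j _; exact: sqr_ge0.
  by rewrite B_eq0 mulr0 /C big1 ?expr0n // => i /v0 ->; rewrite mulr0.
have : 0 <= B * (A * B - C ^+ 2).
  have -> : B * (A * B - C ^+ 2) = \sum_(i | P i) (B * u i - C * v i) ^+ 2.
    transitivity (\sum_(i | P i) (B ^+ 2 * u i ^+ 2 - 2 * B * C * (u i * v i) + C ^+ 2 * v i ^+ 2)).
      by rewrite big_split sumrB /= -!mulr_sumr -/A -/B -/C; ring.
    by apply: eq_bigr => i _; ring.
  by apply: sumr_ge0 => i _; exact: sqr_ge0.
by rewrite pmulr_rge0 // subr_ge0.
Qed.

Lemma CauchySchwarz_sumr_sqrt :
  \sum_(i | P i) u i * v i <=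
  Num.sqrt (\sum_(i | P i) u i ^+ 2) * Num.sqrt (\sum_(i | P i) v i ^+ 2).
Proof.
rewrite -sqrtrM; last by apply: sumr_ge0 => i _; exact: sqr_ge0.
by apply: le_trans (ler_norm _) _; rewrite -sqrtr_sqr ler_wsqrtr // CauchySchwarz_sumr.
Qed.

End CauchySchwarz.

Lemma sqr_sub_le_max (R : realDomainType) (a b A B : R) :
  0 <= a <= A -> 0 <= b <= B -> (a - b) ^+ 2 <= Num.max A B ^+ 2.
Proof.
move=> /andP[a_ge0 a_le] /andP[b_ge0 b_le].
have : a <= Num.max A B by rewrite le_max a_le.
have : b <= Num.max A B by rewrite le_max b_le orbT.
nra.
Qed.

Lemma le0_of_le_mul (R : realFieldType) (G Q : R) :
  0 <= Q -> (forall t, 0 < t -> t <= 1 -> G <= t * Q) -> G <= 0.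
Proof.
move=> Q_ge0 G_le; rewrite leNgt; apply/negP => G_gt0.
have QG_gt0 : 0 < Q + G by lra.
have t_gt0 : 0 < G / (Q + G) by rewrite divr_gt0.
have t_le1 : G / (Q + G) <= 1 by rewrite ler_pdivrMr //; lra.
have tQG : G / (Q + G) * (Q + G) = G by rewrite divfK ?gt_eqF.
have := G_le _ t_gt0 t_le1; nra.
Qed.

Section PairSums.
Variables (R : rcfType) (n : nat) (D S : 'I_n -> {set 'I_n}).
Implicit Types F G : 'I_n -> 'I_n -> R.

Definition pairsum F G := \sum_(i < n) (\sum_(l in D i) F i l + \sum_(j in S i) G i j).

Lemma pairsumD F1 G1 F2 G2 :
  pairsum (fun i j => F1 i j + F2 i j) (fun i j => G1 i j + G2 i j) =
  pairsum F1 G1 + pairsum F2 G2.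
Proof. by rewrite -big_split; apply: eq_bigr => i _; rewrite !big_split /= addrACA. Qed.

Lemma pairsumZ c F G :
  pairsum (fun i j => c * F i j) (fun i j => c * G i j) = c * pairsum F G.
Proof. by rewrite mulr_sumr; apply: eq_bigr => i _; rewrite mulrDr !mulr_sumr. Qed.

Lemma eq_pairsum F1 G1 F2 G2 :
  (forall i j, F1 i j = F2 i j) -> (forall i j, G1 i j = G2 i j) ->
  pairsum F1 G1 = pairsum F2 G2.
Proof.
by move=> eqF eqG; apply: eq_bigr => i _; congr (_ + _); apply: eq_bigr => j _.
Qed.

Lemma ler_pairsum F1 G1 F2 G2 :
  (forall i l, l \in D i -> F1 i l <= F2 i l) -> (forall i j, j \in S i -> G1 i j <= G2 i j) ->
  pairsum F1 G1 <= pairsum F2 G2.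
Proof.
move=> leF leG; apply: ler_sum => i _.
by apply: lerD; apply: ler_sum => j; [exact: leF | exact: leG].
Qed.

Lemma pairsum_ge0 F G :
  (forall i l, l \in D i -> 0 <= F i l) -> (forall i j, j \in S i -> 0 <= G i j) ->
  0 <= pairsum F G.
Proof.
move=> F_ge0 G_ge0; apply: sumr_ge0 => i _.
by apply: addr_ge0; apply: sumr_ge0 => j; [exact: F_ge0 | exact: G_ge0].
Qed.

Lemma CauchySchwarz_pairsum (u u' v v' : 'I_n -> 'I_n -> R) :
  \sum_(i < n) \sum_(l in D i) u i l * v i l <=
  Num.sqrt (pairsum (fun i l => u i l ^+ 2) (fun i j => u' i j ^+ 2)) *
  Num.sqrt (pairsum (fun i l => v i l ^+ 2) (fun i j => v' i j ^+ 2)).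
Proof.
have le_pairsum (w w' : 'I_n -> 'I_n -> R) :
    \sum_(q | true && (q.2 \in D q.1)) w q.1 q.2 ^+ 2 <=
    pairsum (fun i l => w i l ^+ 2) (fun i j => w' i j ^+ 2).
  rewrite -(pair_big_dep xpredT (fun i l => l \in D i) (fun i l => w i l ^+ 2)).
  by apply: ler_sum => i _; rewrite lerDl; apply: sumr_ge0 => j _; exact: sqr_ge0.
rewrite pair_big_dep.
apply: le_trans (CauchySchwarz_sumr_sqrt _ (fun q => u q.1 q.2) (fun q => v q.1 q.2)) _.
by apply: ler_pM; rewrite ?sqrtr_ge0 // ler_wsqrtr.
Qed.

End PairSums.

Section Duality.
Variables (R : realType) (n p : nat) (x : 'I_n -> 'I_p -> R) (D S : 'I_n -> {set 'I_n}).
Variables (L U lam eta : R).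
Hypotheses (lam_gt0 : 0 < lam) (eta_gt0 : 0 < eta).
Implicit Types (m w : 'I_p -> R) (aD aS : 'I_n -> 'I_n -> R).

Local Notation mc := (mc x).
Local Notation pairsum := (pairsum D S).
Local Notation Pobj := (Pobj x D S L U lam eta).
Local Notation Dobj := (Dobj x D S L U lam eta).
Local Notation Calpha := (Calpha x D S).

Definition loss_gap m aD aS :=
  pairsum (fun i l => sqpos_gap (L - mc m i l) (aD i l))
          (fun i j => sqpos_gap (mc m i j - U) (aS i j)).

Definition reg_gap m aD aS :=
  \sum_(k < p) nnquad_gap (lam * eta) (m k) (Calpha aD aS k - lam).

Lemma sum_mul_Calpha m aD aS :
  \sum_(k < p) m k * Calpha aD aS k =
  pairsum (fun i l => aD i l * mc m i l) (fun i j => - (aS i j * mc m i j)).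
Proof.
rewrite /Calpha /mc; under eq_bigr => k _ do rewrite mulr_sumr.
rewrite exchange_big /=; apply: eq_bigr => i _.
under eq_bigr => k _ do rewrite mulrBr !mulr_sumr.
rewrite sumrB exchange_big [X in _ - X]exchange_big /= -sumrN.
by congr (_ + _); apply: eq_bigr => l _; rewrite ?mulr_sumr -?sumrN; apply: eq_bigr => k _; ring.
Qed.

Lemma Pobj_DobjE m aD aS : Pobj m = Dobj aD aS + loss_gap m aD aS + reg_gap m aD aS.
Proof.
have loss : loss_gap m aD aS =
    pairsum (fun i l => hinge2 L (mc m i l)) (fun i j => hinge2 (- U) (- mc m i j))
    - pairsum (fun i l => L * aD i l) (fun i j => - U * aS i j)
    + 1 / 4 * pairsum (fun i l => aD i l ^+ 2) (fun i j => aS i j ^+ 2)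
    + \sum_(k < p) m k * Calpha aD aS k.
  rewrite sum_mul_Calpha -pairsumZ -(mulN1r (pairsum _ _)) -pairsumZ -!pairsumD.
  by apply: eq_pairsum => i j; rewrite ?hinge2_oppr /sqpos_gap /hinge2; ring.
have reg : reg_gap m aD aS =
    lam * eta / 2 * \sum_(k < p) m k ^+ 2 - \sum_(k < p) m k * Calpha aD aS k
    + lam * \sum_(k < p) m k
    + lam * eta / 2 * \sum_(k < p) ((lam * eta)^-1 * pospart (Calpha aD aS k - lam)) ^+ 2.
  rewrite !mulr_sumr -sumrB -!big_split /=.
  by apply: eq_bigr => k _; rewrite /nnquad_gap; field; rewrite !gt_eqF.
rewrite loss reg /Pobj /Dobj /talpha /vnorm2 /pairsum; ring.
Qed.

Definition dualD m i l := 2 * pospart (L - mc m i l).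
Definition dualS m i j := 2 * pospart (mc m i j - U).

Lemma vnonneg_dual m : vnonneg D S (dualD m) (dualS m).
Proof. by move=> i; split=> j _; rewrite mulr_ge0 ?pospart_ge0. Qed.

Lemma loss_gap_ge0 m aD aS : vnonneg D S aD aS -> 0 <= loss_gap m aD aS.
Proof.
move=> a_ge0; apply: pairsum_ge0 => i j j_in; apply: sqpos_gap_ge0.
  exact: (proj1 (a_ge0 i)).
exact: (proj2 (a_ge0 i)).
Qed.

Lemma loss_gap_dual m : loss_gap m (dualD m) (dualS m) = 0.
Proof.
by rewrite /loss_gap /pairsum big1 // => i _; rewrite !big1 ?addr0 // => j _; exact: sqpos_gap_opt.
Qed.

Definition pair_dist m m' :=
  pairsum (fun i l => (mc m' i l - mc m i l) ^+ 2) (fun i j => (mc m' i j - mc m i j) ^+ 2).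

Lemma loss_gap_dual_le m m' : loss_gap m' (dualD m) (dualS m) <= pair_dist m m'.
Proof.
apply: ler_pairsum => i j _; apply: le_trans (sqpos_gap_le _ _) _.
  by rewrite (_ : L - mc m' i j - (L - mc m i j) = - (mc m' i j - mc m i j)) ?sqrrN //; ring.
by rewrite (_ : mc m' i j - U - (mc m i j - U) = mc m' i j - mc m i j) //; ring.
Qed.

Lemma mc_segment m w t i j :
  mc (fun k => m k + t * (w k - m k)) i j = mc m i j + t * (mc w i j - mc m i j).
Proof. by rewrite /Defs.mc -sumrB mulr_sumr -big_split /=; apply: eq_bigr => k _; ring. Qed.

Lemma pair_dist_segment m w t :
  pair_dist m (fun k => m k + t * (w k - m k)) = t ^+ 2 * pair_dist m w.
Proof. by rewrite -pairsumZ; apply: eq_pairsum => i j; rewrite mc_segment; ring. Qed.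

Let c_gt0 : 0 < lam * eta. Proof. exact: mulr_gt0. Qed.

Definition reg_min aD aS k := pospart (Calpha aD aS k - lam) / (lam * eta).

Lemma reg_min_ge0 aD aS k : 0 <= reg_min aD aS k.
Proof. by rewrite divr_ge0 ?pospart_ge0 ?ltW. Qed.

Lemma reg_gap_ge0 m aD aS : (forall k, 0 <= m k) -> 0 <= reg_gap m aD aS.
Proof. by move=> m_ge0; apply: sumr_ge0 => k _; rewrite nnquad_gap_ge0. Qed.

Lemma reg_gap_min aD aS : reg_gap (reg_min aD aS) aD aS = 0.
Proof. by apply: big1 => k _; rewrite nnquad_gap_opt ?gt_eqF. Qed.

Lemma reg_gap_convex m w aD aS t : 0 <= t <= 1 ->
  reg_gap (fun k => m k + t * (w k - m k)) aD aS <=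
  (1 - t) * reg_gap m aD aS + t * reg_gap w aD aS.
Proof.
move=> t01; rewrite !mulr_sumr -big_split /=; apply: ler_sum => k _.
exact: nnquad_gap_convex (ltW c_gt0) t01.
Qed.

Section Optimality.
Variable mstar : 'I_p -> R.
Hypotheses (mstar_ge0 : forall k, 0 <= mstar k)
  (mstar_opt : forall m, (forall k, 0 <= m k) -> Pobj mstar <= Pobj m).

Lemma strong_duality : Pobj mstar = Dobj (dualD mstar) (dualS mstar).
Proof.
set aD := dualD mstar; set aS := dualS mstar; set G := reg_gap mstar aD aS.
have Pobj_star : Pobj mstar = Dobj aD aS + G.
  by rewrite (Pobj_DobjE _ aD aS) loss_gap_dual addr0.
set w := reg_min aD aS; set Q := pair_dist mstar w.
have G_le t : 0 < t -> t <= 1 -> G <= t * Q.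
  move=> t_gt0 t_le1; pose mt k := mstar k + t * (w k - mstar k).
  have mt_ge0 k : 0 <= mt k.
    have : 0 <= w k := reg_min_ge0 aD aS k.
    by have := mstar_ge0 k; rewrite /mt; nra.
  have := mstar_opt mt_ge0; rewrite Pobj_star (Pobj_DobjE mt aD aS).
  have := loss_gap_dual_le mstar mt; rewrite pair_dist_segment -/Q.
  have t01 : 0 <= t <= 1 by rewrite t_le1 ltW.
  have := reg_gap_convex mstar w aD aS t01; rewrite reg_gap_min mulr0 addr0 -/G.
  nra.
have Q_ge0 : 0 <= Q by apply: pairsum_ge0 => i j _; exact: sqr_ge0.
have G_eq0 : G = 0.
  by apply/eqP; rewrite eq_le (le0_of_le_mul Q_ge0 G_le) reg_gap_ge0.
by rewrite Pobj_star G_eq0 addr0.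
Qed.

Variables aDstar aSstar : 'I_n -> 'I_n -> R.
Hypotheses (astar_ge0 : vnonneg D S aDstar aSstar)
  (astar_opt : forall aD aS, vnonneg D S aD aS -> Dobj aD aS <= Dobj aDstar aSstar).

Lemma mstar_eq0_of_Calpha_le k : Calpha aDstar aSstar k <= lam -> mstar k = 0.
Proof.
move=> Calpha_le; have gap_le0 : reg_gap mstar aDstar aSstar <= 0.
  have := astar_opt (vnonneg_dual mstar); rewrite -strong_duality (Pobj_DobjE _ aDstar aSstar).
  by have := loss_gap_ge0 mstar astar_ge0; lra.
have coord_ge0 k0 : true ->
    0 <= nnquad_gap (lam * eta) (mstar k0) (Calpha aDstar aSstar k0 - lam).
  by move=> _; rewrite nnquad_gap_ge0.
have gap_eq0 : reg_gap mstar aDstar aSstar = 0.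
  by apply/eqP; rewrite eq_le gap_le0 reg_gap_ge0.
have s_le0 : Calpha aDstar aSstar k - lam <= 0 by rewrite subr_le0.
exact: nnquad_gap_eq0 c_gt0 (mstar_ge0 k) s_le0 (psumr_eq0P coord_ge0 gap_eq0 (i := k) isT).
Qed.

End Optimality.

End Duality.

Lemma Calpha_le_Prune (R : realType) (n p : nat) (x : 'I_n -> 'I_p -> R)
    (D S : 'I_n -> {set 'I_n}) (aD aS qD qS : 'I_n -> 'I_n -> R) (r : R) (k k' : 'I_p) :
  (forall i k0, 0 <= x i k0) -> (forall i, x i k' <= x i k) ->
  vnonneg D S aD aS -> 0 <= r ->
  vnorm2 D S (fun i j => aD i j - qD i j) (fun i j => aS i j - qS i j) <= r ^+ 2 ->
  Calpha x D S aD aS k' <= Prune x D S qD r k.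
Proof.
move=> x_ge0 x_le a_ge0 r_ge0 dist_le.
pose M i l := Num.max (x i k) (x l k) ^+ 2.
have Calpha_le : Calpha x D S aD aS k' <= \sum_(i < n) \sum_(l in D i) aD i l * M i l.
  apply: ler_sum => i _; have [aD_ge0 aS_ge0] := a_ge0 i.
  rewrite -[X in _ <= X]subr0; apply: lerB.
    apply: ler_sum => l l_in; apply: ler_wpM2l; first exact: aD_ge0.
    by apply: sqr_sub_le_max; rewrite x_ge0 x_le.
  by apply: sumr_ge0 => j j_in; rewrite mulr_ge0 ?sqr_ge0 ?aS_ge0.
have dist_part : \sum_(i < n) \sum_(l in D i) (aD i l - qD i l) * M i l <=
    r * Num.sqrt (\sum_(i < n) (\sum_(l in D i) Num.max (x i k) (x l k) ^+ 4
                               + \sum_(j in S i) Num.max (x i k) (x j k) ^+ 4)).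
  apply: le_trans (CauchySchwarz_pairsum D S (fun i j => aD i j - qD i j)
    (fun i j => aS i j - qS i j) M (fun i j => Num.max (x i k) (x j k) ^+ 2)) _.
  apply: ler_pM; rewrite ?sqrtr_ge0 //.
    by rewrite -(ger0_norm r_ge0) -sqrtr_sqr ler_wsqrtr.
  apply: ler_wsqrtr; rewrite (@eq_pairsum _ _ D S _ _ (fun i l => Num.max (x i k) (x l k) ^+ 4)
    (fun i j => Num.max (x i k) (x j k) ^+ 4)) // => i j; exact: esym (exprM _ 2 2).
have aD_split : \sum_(i < n) \sum_(l in D i) aD i l * M i l =
    \sum_(i < n) \sum_(l in D i) qD i l * M i l +
    \sum_(i < n) \sum_(l in D i) (aD i l - qD i l) * M i l.
  rewrite -big_split; apply: eq_bigr => i _; rewrite -big_split /=.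
  by apply: eq_bigr => l _; ring.
move: Calpha_le dist_part; rewrite aD_split /M /Prune /=; lra.
Qed.

Theorem theorem5 (R : realType) (n K p : nat)
    (x : 'I_n -> 'I_p -> R) (D S : 'I_n -> {set 'I_n})
    (desc : 'I_p -> 'I_p -> Prop)
    (L U eta lam r : R)
    (mstar : 'I_p -> R) (aDstar aSstar qD qS : 'I_n -> 'I_n -> R)
    (k : 'I_p) :
  (0 < n)%N -> (0 < K)%N -> (0 < p)%N ->
  (forall i, #|D i| = K) -> (forall i, #|S i| = K) ->
  (forall i k0, 0 <= x i k0) ->
  (* the graph-mining tree: descendants carry smaller feature values *)
  (forall k1 k2, desc k1 k2 -> forall i, x i k2 <= x i k1) ->
  0 <= U -> U <= L -> 0 < eta -> 0 < lam ->
  (* m* is an optimal solution of the primal problem *)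
  (forall k0, 0 <= mstar k0) ->
  (forall m : 'I_p -> R, (forall k0, 0 <= m k0) ->
     Pobj x D S L U lam eta mstar <= Pobj x D S L U lam eta m) ->
  (* alpha* is an optimal solution of the dual problem *)
  vnonneg D S aDstar aSstar ->
  (forall aD aS, vnonneg D S aD aS ->
     Dobj x D S L U lam eta aD aS <= Dobj x D S L U lam eta aDstar aSstar) ->
  (* the sphere condition *)
  vnonneg D S qD qS -> 0 <= r ->
  vnorm2 D S (fun i j => aDstar i j - qD i j) (fun i j => aSstar i j - qS i j)
    <= r ^+ 2 ->
  Prune x D S qD r k <= lam ->
  mstar k = 0 /\ (forall k', desc k k' -> mstar k' = 0).
Proof.
move=> _ _ _ _ _ x_ge0 x_desc _ _ eta_gt0 lam_gt0 mstar_ge0 mstar_opt astar_ge0 astar_opt _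
  r_ge0 dist_le Prune_le.
have mstar0 k' : (forall i, x i k' <= x i k) -> mstar k' = 0.
  move=> x_le.
  apply: (mstar_eq0_of_Calpha_le lam_gt0 eta_gt0 mstar_ge0 mstar_opt astar_ge0 astar_opt).
  exact: le_trans (Calpha_le_Prune x_ge0 x_le astar_ge0 r_ge0 dist_le) Prune_le.
by split=> [|k' /x_desc]; apply: mstar0.
Qed.
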